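(* Let $G$ be a graph with nonnegative edge costs, distinguished vertices $start$ and $goal$, and let $C^*$ be the cost of a cheapest $start$–$goal$ path. Let $h_F, h_B$ be nonnegative front-to-end heuristics that are admissible and consistent. Fix $W \ge 1$ and a real $\lambda \le W$. Then the algorithm WBAE* (described in the context) is bounded-suboptimal: whenever it returns a solution, its cost is at most $W\cdot C^*$.
   Context: $c(x,y)$ is the cheapest path cost from $x$ to $y$. $h_F(s)$ estimates $c(s,goal)$, $h_B(s)$ estimates $c(start,s)$; admissibility means $h_F(s)\le c(s,goal)$, $h_B(s)\le c(start,s)$ for all $s$; consistency means $h_F(s)\le c(s,s')+h_F(s')$ and $h_B(s')\le c(s,s')+h_B(s)$ for all $s,s'$. WBAE* is a bidirectional best-first search: a forward search from $start$ with open list $\mathrm{OPEN}_F$ and $g_F$-values (costs of discovered paths from $start$), and a backward search from $goal$ with open list $\mathrm{OPEN}_B$ and $g_B$-values (costs of discovered paths to $goal$). For direction $D$ with opposite $\bar D$, a node $n$ in $\mathrm{OPEN}_D$ has priority $b_{W_D}(n) = g_D(n) + W\cdot h_D(n) + \lambda\,(g_D(n) - h_{\bar D}(n))$. An incumbent solution cost $U$ (initially $\infty$) is updated whenever a generated node is matched with the opposite frontier, giving a $start$–$goal$ path of cost lower than $U$. In each iteration a direction $D$ is chosen (e.g. alternating), a node with minimal $b_{W_D}$ in $\mathrm{OPEN}_D$ is expanded, and the lower bound $LB_{WB} = (b_W\mathrm{Min}_F + b_W\mathrm{Min}_B)/2$ is recomputed, where $b_W\mathrm{Min}_D$ is the minimal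 $b_{W_D}$-value in $\mathrm{OPEN}_D$. The algorithm terminates and returns $U$ once $U \le LB_{WB}$ (with $U$ the cost of a path found through a state on both frontiers). *)

(* Model of the WBAE* bidirectional search as a
   nondeterministic transition system over a finite directed graph. *)
From HB Require Import structures.
From mathcomp Require Import all_boot all_order all_algebra.
Set Implicit Arguments. Unset Strict Implicit. Unset Printing Implicit Defensive.
Import Order.TTheory GRing.Theory Num.Theory.
Local Open Scope ring_scope.

Section WBAE.
Variables (R : realFieldType) (T : finType).
(* directed graph: edge relation e, edge costs w (only meaningful on edges) *)
Variables (e : rel T) (w : T -> T -> R).
Variables (start goal : T).
Variables (hF hB : T -> R) (W lam : R).

Fixpoint pcost (x : T) (p : seq T) : R :=
  if p is y :: p' then w x y + pcost y p' else 0.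

Definition is_path (x y : T) (p : seq T) : Prop :=
  path e x p /\ last x p = y.

(* c(x,y) is the infimum of pcost over paths; comparisons with c are
   written by quantifying over all paths (c = +oo if no path). *)
Definition nonneg_costs : Prop := forall x y, e x y -> 0 <= w x y.

Definition admissible : Prop :=
  (forall s p, is_path s goal p -> hF s <= pcost s p) /\
  (forall s p, is_path start s p -> hB s <= pcost start p).

Definition consistent : Prop :=
  (forall s s' p, is_path s s' p -> hF s <= pcost s p + hF s') /\
  (forall s s' p, is_path s s' p -> hB s' <= pcost s p + hB s).

(* directions: true = forward, false = backward *)
Definition succ (D : bool) (n m : T) : bool := if D then e n m else e m n.
Definition wt (D : bool) (n m : T) : R := if D then w n m else w m n.
Definition h (D : bool) : T -> R := if D then hF else hB.

Record state := St {
  g : bool -> T -> R;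
  op : bool -> {set T};
  cl : bool -> {set T};
  U : option R                 (* incumbent; None = +oo *)
}.

Definition omin (a : option R) (x : R) : option R :=
  if a is Some u then Some (Num.min u x) else Some x.

Definition ole (a b : option R) : bool :=
  match a, b with
  | _, None => true
  | None, Some _ => false
  | Some x, Some y => x <= y
  end.

Definition bW (s : state) (D : bool) (n : T) : R :=
  g s D n + W * h D n + lam * (g s D n - h (~~ D) n).

(* initial state; start and goal are generated and, if start = goal,
   immediately matched, giving U = 0 *)
Definition init : state :=
  St (fun _ _ => 0)
     (fun D => if D then [set start] else [set goal])
     (fun _ => set0)
     (if start == goal then Some 0 else None).

Definition expand (s : state) (D : bool) (n : T) : state :=
  let gn := g s D n in
  let I := [set m | succ D n m &&
             ((m \notin op s D :|: cl s D) || (gn + wt D n m < g s D m))] in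
  St (fun D' m => if (D' == D) && (m \in I) then gn + wt D n m else g s D' m)
     (fun D' => if D' == D then (op s D :\ n) :|: I else op s D')
     (fun D' => if D' == D then (cl s D :|: [set n]) :\: I else cl s D')
     (foldr (fun m acc => if succ D n m && (m \in op s (~~ D))
                          then omin acc (gn + wt D n m + g s (~~ D) m)
                          else acc) (U s) (enum T)).

(* termination test U <= LB_WB = (bWMin_F + bWMin_B)/2 (min over empty = +oo) *)
Definition terminated (s : state) : Prop :=
  op s true = set0 \/ op s false = set0 \/
  exists nF nB, [/\ nF \in op s true, nB \in op s false,
    (forall m, m \in op s true -> bW s true nF <= bW s true m),
    (forall m, m \in op s false -> bW s false nB <= bW s false m) &
    ole (U s) (Some ((bW s true nF + bW s false nB) / 2))].

(* states reachable by running WBAE* with an arbitrary direction-choice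
   policy and arbitrary tie-breaking *)
Inductive reach : state -> Prop :=
| reach_init : reach init
| reach_step s D n : reach s -> ~ terminated s -> n \in op s D ->
    (forall m, m \in op s D -> bW s D n <= bW s D m) ->
    reach (expand s D n).

End WBAE.

From HB Require Import structures.
From mathcomp Require Import all_boot all_order all_algebra.
From mathcomp Require Import lra.
Import Order.TTheory GRing.Theory Num.Theory.
Set Implicit Arguments. Unset Strict Implicit. Unset Printing Implicit Defensive.
Local Open Scope ring_scope.

(* Every g-value is the cost of a discovered path, and every successor of a
   closed node is generated with a g-value relaxed through that node.
   Walking along a cheapest start-goal path pi, either some node of pi is
   generated in both directions with g-values bounded by the costs of the two
   pieces of pi, and then U <= C*, or there are a forward-open node x on pi
   and a later backward-open node y with g_F(x) <= c(start, x) and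
   g_B(y) <= c(y, goal).  In the second case admissibility (h_B(x) <= g_F(x),
   h_F(y) <= g_B(y)) and consistency along pi between x and y give
   b_F(x) + b_B(y) <= 2 W C*; the lambda-terms are absorbed because
   lambda <= W, and W >= 1 pays for (1 + W)(g_F(x) + g_B(y)).  At termination
   U <= LB_WB <= (b_F(x) + b_B(y)) / 2 <= W C*. *)

Section OptionOrder.
Variable R : realFieldType.
Implicit Types (a b c : option R) (x y : R).

Lemma ole_refl a : ole a a.
Proof. by case: a => //= x; exact: lexx. Qed.

Lemma ole_trans b a c : ole a b -> ole b c -> ole a c.
Proof. by case: a => [x|]; case: b => [y|]; case: c => [z|] //=; exact: le_trans. Qed.

Lemma ole_Some_trans a x y : ole a (Some x) -> x <= y -> ole a (Some y).
Proof. by move=> lax lexy; apply: ole_trans lax _. Qed.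

Lemma omin_lel a x : ole (omin a x) a.
Proof. by case: a => //= u; rewrite ge_min lexx. Qed.

Lemma omin_ler a x : ole (omin a x) (Some x).
Proof. by case: a => /= [u|]; rewrite ?ge_min lexx ?orbT. Qed.

Lemma foldr_omin_le_init (T : Type) (P : pred T) (f : T -> R) a l :
  ole (foldr (fun m acc => if P m then omin acc (f m) else acc) a l) a.
Proof.
elim: l => [|y l IHl] /=; first exact: ole_refl.
by case: ifP => // _; apply: ole_trans (omin_lel _ _) IHl.
Qed.

Lemma foldr_omin_le_mem (T : eqType) (P : pred T) (f : T -> R) a l m :
  m \in l -> P m ->
  ole (foldr (fun m acc => if P m then omin acc (f m) else acc) a l) (Some (f m)).
Proof.
elim: l => [|y l IHl] //=; rewrite in_cons => /orP[/eqP-> -> | ml Pm].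
  exact: omin_ler.
by case: ifP => _; [apply: ole_trans (omin_lel _ _) _|]; exact: IHl.
Qed.

End OptionOrder.

Section Paths.
Variables (R : realFieldType) (T : finType) (e : rel T) (w : T -> T -> R).

Lemma pcost_cat x p1 p2 :
  pcost w x (p1 ++ p2) = pcost w x p1 + pcost w (last x p1) p2.
Proof. by elim: p1 x => [|y p1 IHp] x /=; rewrite ?add0r // IHp addrA. Qed.

Lemma pcost_rcons x p y : pcost w x (rcons p y) = pcost w x p + w (last x p) y.
Proof. by rewrite -cats1 pcost_cat /= addr0. Qed.

Lemma pcost_ge0 x p : nonneg_costs e w -> path e x p -> 0 <= pcost w x p.
Proof.
move=> w_ge0; elim: p x => [|y p IHp] x //= /andP[exy pyp].
by rewrite addr_ge0 ?w_ge0 ?IHp.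
Qed.

Lemma is_path_cat x z p1 p2 : is_path e x z (p1 ++ p2) ->
  is_path e x (last x p1) p1 /\ is_path e (last x p1) z p2.
Proof. by case; rewrite cat_path last_cat => /andP[]. Qed.

Lemma negb_eqF (b : bool) : (~~ b == b) = false.
Proof. by case: b. Qed.

Lemma succ_negb D n m : succ e (~~ D) n m = succ e D m n.
Proof. by case: D. Qed.

Lemma wt_negb D n m : wt w (~~ D) n m = wt w D m n.
Proof. by case: D. Qed.

End Paths.

Section Expansion.
Variables (R : realFieldType) (T : finType) (e : rel T) (w : T -> T -> R).
Implicit Types (s : state R T) (D : bool) (n m : T).

Definition generated s D := op s D :|: cl s D.

Definition relaxed s D n :=
  [set m | succ e D n m &&
     ((m \notin generated s D) || (g s D n + wt w D n m < g s D m))].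

Variables (s : state R T) (D : bool) (n0 : T).
Local Notation s' := (expand e w s D n0).

Lemma g_expand D' m :
  g s' D' m = if (D' == D) && (m \in relaxed s D n0)
              then g s D n0 + wt w D n0 m else g s D' m.
Proof. by []. Qed.

Lemma g_expand_notin D' m : m \notin relaxed s D n0 -> g s' D' m = g s D' m.
Proof. by move=> m_rel; rewrite g_expand (negbTE m_rel) andbF. Qed.

Lemma cl_expand D' m :
  (m \in cl s' D') = if D' == D
    then ((m \in cl s D) || (m == n0)) && (m \notin relaxed s D n0)
    else m \in cl s D'.
Proof. by rewrite /expand /=; case: (D' == D); rewrite // /relaxed !inE andbC. Qed.

Lemma generated_expand D' m : n0 \in op s D ->
  (m \in generated s' D') =
  (m \in generated s D') || ((D' == D) && (m \in relaxed s D n0)).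
Proof.
move=> n0_op; rewrite /generated /expand /=.
case: (D' =P D) => [->|_]; last by rewrite orbF.
rewrite /relaxed /generated !inE /=.
case: (m =P n0) => [->|_]; first rewrite n0_op.
  by case: (succ e D n0 n0); case: (_ < _); case: (n0 \in cl s D).
by case: (succ e D n0 m); case: (_ < _); case: (m \in op s D); case: (m \in cl s D).
Qed.

Lemma g_expand_le D' m : m \in generated s D' -> g s' D' m <= g s D' m.
Proof.
rewrite g_expand; case: ifP => [/andP[/eqP-> ]|_ _]; last exact: lexx.
by rewrite inE => /andP[_ /orP[/negP//|/ltW]].
Qed.

Lemma expand_succ m : n0 \in op s D -> succ e D n0 m ->
  m \in generated s' D /\ g s' D m <= g s D n0 + wt w D n0 m.
Proof.
move=> n0_op sm; rewrite generated_expand // g_expand eqxx /=.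
case: ifPn => [_|]; first by rewrite orbT lexx.
by rewrite inE sm negb_or negbK -leNgt => /andP[-> ->].
Qed.

Lemma U_expand_le : ole (U s') (U s).
Proof. exact: foldr_omin_le_init. Qed.

Lemma U_expand_match m : succ e D n0 m -> m \in op s (~~ D) ->
  ole (U s') (Some (g s D n0 + wt w D n0 m + g s (~~ D) m)).
Proof.
move=> sm m_op; have := @foldr_omin_le_mem _ _
  (fun m => succ e D n0 m && (m \in op s (~~ D)))
  (fun m => g s D n0 + wt w D n0 m + g s (~~ D) m) (U s) _ _ (mem_enum T m).
by rewrite /= sm m_op; apply.
Qed.

End Expansion.

Lemma priority_sum_le (R : realFieldType) (W lam gF gB hFx hFy hBx hBy c1 c2 c3 : R) :
  1 <= W -> lam <= W -> 0 <= c1 -> 0 <= c3 -> gF <= c1 -> gB <= c3 ->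
  hFx <= c2 + hFy -> hBy <= c2 + hBx -> hFy <= gB -> hBx <= gF ->
  (gF + W * hFx + lam * (gF - hBx)) + (gB + W * hBy + lam * (gB - hFy))
    <= 2 * (W * (c1 + c2 + c3)).
Proof.
move=> W_ge1 lam_leW c1_ge0 c3_ge0 gFc1 gBc3 hFxy hByx hFy_gB hBx_gF.
have hF_le : W * hFx <= W * (c2 + hFy) by rewrite ler_wpM2l //; lra.
have hB_le : W * hBy <= W * (c2 + hBx) by rewrite ler_wpM2l //; lra.
have lam_le : (W - lam) * (hFy + hBx) <= (W - lam) * (gB + gF)
  by rewrite ler_wpM2l ?subr_ge0 //; lra.
have g_le : (1 + W) * (gF + gB) <= (1 + W) * (c1 + c3) by rewrite ler_wpM2l //; lra.
have W_le : (W - 1) * (c1 + c3) >= 0 by rewrite mulr_ge0 //; lra.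
nra.
Qed.

Section Invariant.
Variables (R : realFieldType) (T : finType) (e : rel T) (w : T -> T -> R).
Variables (start goal : T).

Record invariant (s : state R T) : Prop := Invariant {
  closed_succ : forall D n m, n \in cl s D -> succ e D n m ->
    m \in generated s D /\ g s D m <= g s D n + wt w D n m;
  start_generated : start \in generated s true;
  g_start : g s true start <= 0;
  goal_generated : goal \in generated s false;
  g_goal : g s false goal <= 0;
  gF_path : forall n, n \in generated s true ->
    exists2 q, is_path e start n q & pcost w start q <= g s true n;
  gB_path : forall n, n \in generated s false ->
    exists2 q, is_path e n goal q & pcost w n q <= g s false n;
  U_meet : forall D n, n \in generated s D -> n \in generated s (~~ D) ->
    ole (U s) (Some (g s D n + g s (~~ D) n))
}.

Lemma invariant_init : invariant (init R start goal).
Proof.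
rewrite /init /generated; split=> /=.
- by move=> D n m; rewrite in_set0.
- by rewrite !inE eqxx.
- exact: lexx.
- by rewrite !inE eqxx.
- exact: lexx.
- move=> n; rewrite !inE orbF => /eqP->; exists [::] => //; exact: lexx.
- move=> n; rewrite !inE orbF => /eqP->; exists [::] => //; exact: lexx.
- by case=> n; rewrite /= !inE !orbF => /eqP-> /eqP->; rewrite eqxx /= addr0 lexx.
Qed.

Section Expand.
Variables (s : state R T) (D : bool) (n0 : T).
Hypotheses (inv_s : invariant s) (n0_op : n0 \in op s D).
Local Notation s' := (expand e w s D n0).

Let n0_gen : n0 \in generated s D.
Proof. by rewrite inE n0_op. Qed.

Lemma closed_succ_expand D' n m : n \in cl s' D' -> succ e D' n m ->
  m \in generated s' D' /\ g s' D' m <= g s' D' n + wt w D' n m.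
Proof.
rewrite cl_expand; case: (D' =P D) => [->{D'}|/eqP neD].
  move=> /andP[/orP[n_cl|/eqP->] n_rel] sm; last first.
    by rewrite (g_expand_notin _ n_rel); exact: expand_succ.
  have [m_gen le_m] := closed_succ inv_s n_cl sm.
  rewrite generated_expand // m_gen (g_expand_notin _ n_rel).
  by split=> //; apply: le_trans (g_expand_le e w D n0 m_gen) le_m.
move=> n_cl sm; have [m_gen le_m] := closed_succ inv_s n_cl sm.
by rewrite generated_expand // m_gen !g_expand (negbTE neD).
Qed.

Lemma gF_path_expand n : n \in generated s' true ->
  exists2 q, is_path e start n q & pcost w start q <= g s' true n.
Proof.
rewrite generated_expand // g_expand.
case: ifP => [/andP[/eqP eD n_rel] _|_]; last by rewrite orbF; exact: gF_path.
subst D; move: n_rel; rewrite inE /= => /andP[en0n _].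
have [q [q_path q_last] le_q] := gF_path inv_s n0_gen.
exists (rcons q n); first by rewrite /is_path rcons_path q_path q_last last_rcons.
by rewrite pcost_rcons q_last lerD2r.
Qed.

Lemma gB_path_expand n : n \in generated s' false ->
  exists2 q, is_path e n goal q & pcost w n q <= g s' false n.
Proof.
rewrite generated_expand // g_expand.
case: ifP => [/andP[/eqP eD n_rel] _|_]; last by rewrite orbF; exact: gB_path.
subst D; move: n_rel; rewrite inE /= => /andP[enn0 _].
have [q [q_path q_last] le_q] := gB_path inv_s n0_gen.
exists (n0 :: q); first by rewrite /is_path /= enn0 q_path.
by rewrite /= addrC lerD2r.
Qed.

(* A node newly reached from direction [D] is either open in the other
   direction, and then matched by the expansion, or closed there, and then
   [n0] was already met in both directions. *)
Lemma U_meet_expand_dir n : n \in generated s' D -> n \in generated s' (~~ D) ->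
  ole (U s') (Some (g s' D n + g s' (~~ D) n)).
Proof.
rewrite !generated_expand // !g_expand eqxx negb_eqF !orbF /=.
case: ifPn => [n_rel _ n_gen'|_ n_gen n_gen']; last first.
  rewrite orbF in n_gen.
  exact: ole_trans (U_expand_le e w s D n0) (U_meet inv_s n_gen n_gen').
move: n_rel; rewrite inE => /andP[sn _].
case n_op: (n \in op s (~~ D)); first exact: U_expand_match.
have n_cl : n \in cl s (~~ D) by move: n_gen'; rewrite inE n_op.
have [n0_gen' le_n0] := closed_succ inv_s n_cl (etrans (succ_negb e _ _ _) sn).
rewrite wt_negb in le_n0.
apply: ole_trans (U_expand_le e w s D n0) _.
by apply: ole_Some_trans (U_meet inv_s n0_gen n0_gen') _; lra.
Qed.

Lemma U_meet_expand D' n : n \in generated s' D' -> n \in generated s' (~~ D') ->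
  ole (U s') (Some (g s' D' n + g s' (~~ D') n)).
Proof.
case: (D' =P D) => [->|/eqP neD]; first exact: U_meet_expand_dir.
have -> : D' = ~~ D by case: D' D neD => [] [].
by rewrite negbK addrC => ? ?; exact: U_meet_expand_dir.
Qed.

Lemma invariant_expand : invariant s'.
Proof.
split.
- exact: closed_succ_expand.
- by rewrite generated_expand // start_generated.
- exact: le_trans (g_expand_le e w D n0 (start_generated inv_s)) (g_start inv_s).
- by rewrite generated_expand // goal_generated.
- exact: le_trans (g_expand_le e w D n0 (goal_generated inv_s)) (g_goal inv_s).
- exact: gF_path_expand.
- exact: gB_path_expand.
- exact: U_meet_expand.
Qed.

End Expand.

Lemma invariant_reach hF hB W lam s :
  reach e w start goal hF hB W lam s -> invariant s.
Proof.
elim=> [|s' D n _ inv_s' _ n_op _]; first exact: invariant_init.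
exact: invariant_expand.
Qed.

Section Frontier.
Variable s : state R T.
Hypothesis inv_s : invariant s.

Lemma forward_frontier x p : is_path e start x p ->
  (x \in generated s true /\ g s true x <= pcost w start p) \/
  exists p1 p2, [/\ p = p1 ++ p2, last start p1 \in op s true &
                    g s true (last start p1) <= pcost w start p1].
Proof.
elim/last_ind: p x => [|p y IHp] x [] /=.
  by move=> _ <-; left; split; [exact: start_generated | exact: g_start].
rewrite rcons_path last_rcons => /andP[p_path ey] <-.
have [[y'_gen le_y']|[p1 [p2 [-> p1_op le_p1]]]] := IHp _ (conj p_path erefl).
  case y'_op: (last start p \in op s true).
    by right; exists p, [:: y]; rewrite cats1.
  have y'_cl : last start p \in cl s true by move: y'_gen; rewrite inE y'_op.
  have [y_gen le_y] := closed_succ inv_s y'_cl ey.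
  by left; split=> //; rewrite pcost_rcons; apply: le_trans le_y _; rewrite lerD2r.
by right; exists p1, (rcons p2 y); rewrite rcons_cat.
Qed.

Lemma backward_frontier x p : is_path e x goal p ->
  (x \in generated s false /\ g s false x <= pcost w x p) \/
  exists p1 p2, [/\ p = p1 ++ p2, last x p1 \in op s false &
                    g s false (last x p1) <= pcost w (last x p1) p2].
Proof.
elim: p x => [|y p IHp] x [] /=.
  by move=> _ ->; left; split; [exact: goal_generated | exact: g_goal].
move=> /andP[exy p_path] p_last.
have [[y_gen le_y]|[p1 [p2 [-> p1_op le_p1]]]] := IHp _ (conj p_path p_last).
  case y_op: (y \in op s false); first by right; exists [:: y], p.
  have y_cl : y \in cl s false by move: y_gen; rewrite inE y_op.
  have [x_gen le_x] := closed_succ inv_s y_cl exy.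
  by left; split=> //; apply: le_trans le_x _; rewrite /= addrC lerD2l.
by right; exists (y :: p1), p2.
Qed.

Lemma U_le_meet x c1 c2 : x \in generated s true -> x \in generated s false ->
  g s true x <= c1 -> g s false x <= c2 -> ole (U s) (Some (c1 + c2)).
Proof.
move=> xF xB le1 le2; apply: ole_Some_trans (U_meet inv_s xF xB) _.
exact: lerD.
Qed.

End Frontier.

End Invariant.

Section Termination.
Variables (R : realFieldType) (T : finType) (e : rel T) (w : T -> T -> R).
Variables (start goal : T) (hF hB : T -> R) (W lam : R).
Local Notation bW := (bW hF hB W lam).

Lemma terminated_open_le s x y : terminated hF hB W lam s ->
  x \in op s true -> y \in op s false ->
  ole (U s) (Some ((bW s true x + bW s false y) / 2)).
Proof.
move=> [op0|[op0|[nF [nB [_ _ minF minB le_U]]]]] x_op y_op.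
- by move: x_op; rewrite op0 in_set0.
- by move: y_op; rewrite op0 in_set0.
apply: ole_Some_trans le_U _.
have := minF _ x_op; have := minB _ y_op; lra.
Qed.

Hypotheses (adm : admissible e w start goal hF hB) (cons : consistent e w hF hB).
Hypotheses (w_ge0 : nonneg_costs e w) (W_ge1 : 1 <= W) (lam_leW : lam <= W).

Lemma bW_open_pair_le s x y p1 p2 p3 : invariant e w start goal s ->
  x \in generated s true -> y \in generated s false ->
  is_path e start x p1 -> is_path e x y p2 -> is_path e y goal p3 ->
  g s true x <= pcost w start p1 -> g s false y <= pcost w y p3 ->
  bW s true x + bW s false y
    <= 2 * (W * (pcost w start p1 + pcost w x p2 + pcost w y p3)).
Proof.
move=> inv_s x_gen y_gen p1_path p2_path p3_path gFx gBy.
have [qx qx_path le_qx] := gF_path inv_s x_gen.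
have [qy qy_path le_qy] := gB_path inv_s y_gen.
rewrite /bW /=; apply: priority_sum_le => //.
- exact: pcost_ge0 w_ge0 p1_path.1.
- exact: pcost_ge0 w_ge0 p3_path.1.
- exact: cons.1 p2_path.
- exact: cons.2 p2_path.
- exact: le_trans (adm.1 _ _ qy_path) le_qy.
- exact: le_trans (adm.2 _ _ qx_path) le_qx.
Qed.

End Termination.

Theorem theorem2 (R : realFieldType) (T : finType) (e : rel T) (w : T -> T -> R)
  (start goal : T) (hF hB : T -> R) (W lam : R) :
  nonneg_costs e w ->
  (forall s, 0 <= hF s) -> (forall s, 0 <= hB s) ->
  admissible e w start goal hF hB ->
  consistent e w hF hB ->
  1 <= W -> lam <= W ->
  forall (s : state R T) (u : R),
    reach e w start goal hF hB W lam s ->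
    terminated hF hB W lam s ->
    U s = Some u ->
    forall p : seq T, is_path e start goal p -> u <= W * pcost w start p.
Proof.
move=> w_ge0 _ _ adm cons W_ge1 lam_leW s u reach_s term_s Us p p_path.
have inv_s := invariant_reach reach_s.
have C_le : pcost w start p <= W * pcost w start p.
  by rewrite ler_peMl // (pcost_ge0 w_ge0 p_path.1).
suff : ole (U s) (Some (W * pcost w start p)) by rewrite Us.
have [[goalF gF_goal]|[p1 [p2 [Ep x_op gFx]]]] := forward_frontier inv_s p_path.
  have := U_le_meet inv_s goalF (goal_generated inv_s) gF_goal (g_goal inv_s).
  by rewrite addr0 => /ole_Some_trans; apply; exact: C_le.
subst p; have [p1_path p2_path] := is_path_cat p_path.
have x_gen : last start p1 \in generated s true by rewrite inE x_op.
have [[xB gBx]|[p21 [p22 [Ep2 y_op gBy]]]] := backward_frontier inv_s p2_path.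
  have := U_le_meet inv_s x_gen xB gFx gBx.
  by rewrite -pcost_cat => /ole_Some_trans; apply; exact: C_le.
subst p2; have [p21_path p22_path] := is_path_cat p2_path.
have y_gen : last (last start p1) p21 \in generated s false by rewrite inE y_op.
apply: ole_Some_trans (terminated_open_le term_s x_op y_op) _.
have := bW_open_pair_le adm cons w_ge0 W_ge1 lam_leW inv_s x_gen y_gen
  p1_path p21_path p22_path gFx gBy.
rewrite !pcost_cat; lra.
Qed.
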